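(* There exist $R_0>0$ (with $R_0\ll\sqrt{3/(4\pi)}$) and $C>0$ such that for every $0<R<R_0$ there is a continuous solution $(m_R,\rho_R):[0,R]\to\mathbb{R}^2$ of the system $$\frac{dm}{dr}=4\pi r^2\rho,\qquad \frac{d\rho}{dr}=-\frac{2\rho-1}{r-2m}\Big[4\pi r^2(\rho-1)+\frac{m}{r}\Big],$$ with $\rho_R$ monotone decreasing and $m_R$ monotone increasing on $[0,R]$, and such that $$1\le\rho_R(r)\le 1+CR^2,\quad \rho_R(R)=1,\qquad m_R(0)=0,\quad 1\le \frac{3}{4\pi}\frac{m_R(r)}{r^3}\le 1+CR^2,$$ where $C$ is independent of $R$.
   Context: The system is the Tolman–Oppenheimer–Volkoff system for a static spherically symmetric barotropic fluid with equation of state $p=\rho-1$ (units with critical density $1$); $m$ is the Hawking mass and $\rho$ the energy density, as functions of the area radius $r$. Such solutions are called (small) static hard stars of radius $R$. *)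

From Stdlib Require Import Reals.
Open Scope R_scope.

(* Right-hand sides of the TOV system with EOS p = rho - 1. *)
Definition tov_m_rhs (r m rho : R) : R := 4 * PI * r ^ 2 * rho.
Definition tov_rho_rhs (r m rho : R) : R :=
  - ((2 * rho - 1) / (r - 2 * m)) * (4 * PI * r ^ 2 * (rho - 1) + m / r).

From Stdlib Require Import Reals Lra Lia.
From Coquelicot Require Import Coquelicot.
Open Scope R_scope.

(* The density is sought as a fixed point of rho |-> 1 + int_r^R G(rho), where G(rho) = -rho' is the
   right-hand side of the TOV equation evaluated with the mass m(r) = int_0^r 4 pi t^2 rho generated by
   rho; then rho(R) = 1 and m(0) = 0 hold by construction.  Writing m = u r^3 one has G = r H(rho, u, r),
   where H is bounded and Lipschitz as long as 1 <= rho <= 2 and r <= 1/100, and u is controlled by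
   sup |rho|.  The factor r therefore makes the map send densities with values in [1, 2] to densities
   with values in [1, 1 + 162 R^2] and halve their sup distance, so Picard iteration converges to a
   fixed point.  Monotonicity follows from G >= 0 and rho > 0. *)

(** * Uniform convergence and Picard iteration *)

Definition dist_le (f g : R -> R) (d : R) := forall x, Rabs (f x - g x) <= d.

Definition unif_cv (u : nat -> R -> R) (l : R -> R) :=
  forall eps, 0 < eps -> exists N, forall n x, (N <= n)%nat -> Rabs (l x - u n x) < eps.

Lemma continuity_pt_unif_cv u l x :
  unif_cv u l -> (forall n y, continuity_pt (u n) y) -> continuity_pt l x.
Proof.
  intros Hu Hc.
  apply (CVU_continuity u l x (mkposreal 1 Rlt_0_1)).
  - intros eps Heps. destruct (Hu eps Heps) as [N HN]. exists N. intros n y Hn _. exact (HN n y Hn).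
  - intros n y _. apply Hc.
  - unfold Boule. rewrite Rminus_diag, Rabs_R0. simpl. lra.
Qed.

Lemma unif_cv_bounds u l a b :
  unif_cv u l -> (forall n x, a <= u n x <= b) -> forall x, a <= l x <= b.
Proof.
  intros Hu Hb x. split; apply le_epsilon; intros eps Heps;
    destruct (Hu eps Heps) as [N HN]; specialize (HN N x (Nat.le_refl N));
    specialize (Hb N x); apply Rabs_lt_between in HN; lra.
Qed.

Lemma Un_cv_dist_le u l a e n :
  Un_cv u l -> (forall m, (n <= m)%nat -> Rabs (u m - a) <= e) -> Rabs (l - a) <= e.
Proof.
  intros Hu Hb. apply le_epsilon. intros eps Heps.
  destruct (Hu eps Heps) as [N HN]. specialize (HN (Nat.max n N) (Nat.le_max_r n N)).
  specialize (Hb (Nat.max n N) (Nat.le_max_l n N)). unfold R_dist in HN.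
  pose proof (Rabs_triang (l - u (Nat.max n N)) (u (Nat.max n N) - a)) as Htri.
  replace (l - u (Nat.max n N) + (u (Nat.max n N) - a)) with (l - a) in Htri by ring.
  rewrite Rabs_minus_sym in HN. lra.
Qed.

Section Picard.

Variables (P : (R -> R) -> Prop) (F : (R -> R) -> R -> R) (k : R) (f0 : R -> R) (D : R).
Hypothesis k_range : 0 <= k < 1.
Hypothesis P_F : forall f, P f -> P (F f).
Hypothesis F_contract : forall f g d, P f -> P g -> dist_le f g d -> dist_le (F f) (F g) (k * d).
Hypothesis P_unif_cv : forall u l, (forall n, P (u n)) -> unif_cv u l -> P l.
Hypothesis P_f0 : P f0.
Hypothesis F_f0 : dist_le (F f0) f0 D.

Definition picard n := Nat.iter n F f0.

Lemma picard_P n : P (picard n).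
Proof. induction n as [|n IH]; [exact P_f0 | exact (P_F _ IH)]. Qed.

Lemma picard_step n : dist_le (picard (S n)) (picard n) (D * k ^ n).
Proof.
  induction n as [|n IH].
  - rewrite pow_O, Rmult_1_r. exact F_f0.
  - intros x. rewrite <- tech_pow_Rmult, Rmult_comm, Rmult_assoc, (Rmult_comm _ D).
    exact (F_contract _ _ _ (picard_P (S n)) (picard_P n) IH x).
Qed.

Let tail n := D * k ^ n / (1 - k).

Lemma picard_cauchy n m : (n <= m)%nat -> dist_le (picard m) (picard n) (tail n).
Proof.
  intros Hnm x. unfold tail. replace m with (n + (m - n))%nat by lia.
  assert (HD : 0 <= D) by (eapply Rle_trans; [apply Rabs_pos | apply (F_f0 0)]).
  assert (Hgeom : forall j, Rabs (picard (n + j) x - picard n x) <= D * (k ^ n - k ^ (n + j)) / (1 - k)).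
  { induction j as [|j IH].
    - rewrite Nat.add_0_r, !Rminus_diag, Rabs_R0, Rmult_0_r. unfold Rdiv. lra.
    - replace (n + S j)%nat with (S (n + j)) by lia.
      pose proof (picard_step (n + j) x) as Hs.
      replace (picard (S (n + j)) x - picard n x)
        with ((picard (S (n + j)) x - picard (n + j) x) + (picard (n + j) x - picard n x)) by ring.
      eapply Rle_trans; [apply Rabs_triang|].
      replace (D * (k ^ n - k ^ S (n + j)) / (1 - k))
        with (D * k ^ (n + j) + D * (k ^ n - k ^ (n + j)) / (1 - k)) by (simpl; field; lra).
      lra. }
  eapply Rle_trans; [apply Hgeom|]. apply Rmult_le_compat_r.
  - apply Rlt_le, Rinv_0_lt_compat; lra.
  - pose proof (pow_le k (n + (m - n)) (proj1 k_range)). nra.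
Qed.

Lemma tail_vanishes eps : 0 < eps -> exists N, forall n, (N <= n)%nat -> tail n < eps.
Proof.
  intros Heps. unfold tail.
  assert (HD : 0 <= D) by (eapply Rle_trans; [apply Rabs_pos | apply (F_f0 0)]).
  destruct (pow_lt_1_zero k ltac:(rewrite Rabs_right; lra) (eps * (1 - k) / (D + 1)))
    as [N HN].
  { apply Rdiv_lt_0_compat; nra. }
  exists N. intros n Hn. specialize (HN n Hn). rewrite Rabs_right in HN by (apply Rle_ge, pow_le; lra).
  apply Rmult_lt_reg_r with (1 - k); [lra|].
  replace (D * k ^ n / (1 - k) * (1 - k)) with (D * k ^ n) by (field; lra).
  apply Rle_lt_trans with (D * (eps * (1 - k) / (D + 1))); [apply Rmult_le_compat_l; lra|].
  replace (D * (eps * (1 - k) / (D + 1))) with (eps * (1 - k) - eps * (1 - k) / (D + 1))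
    by (field; lra).
  assert (0 < eps * (1 - k) / (D + 1)) by (apply Rdiv_lt_0_compat; nra). lra.
Qed.

Lemma picard_cauchy_crit x : Cauchy_crit (fun n => picard n x).
Proof.
  intros eps Heps. destruct (tail_vanishes eps Heps) as [N HN]. exists N.
  intros n m Hn Hm. unfold R_dist.
  destruct (Nat.le_ge_cases n m) as [H | H].
  - rewrite Rabs_minus_sym. eapply Rle_lt_trans; [apply picard_cauchy, H | apply HN, Hn].
  - eapply Rle_lt_trans; [apply picard_cauchy, H | apply HN, Hm].
Qed.

Definition picard_limit x := proj1_sig (Rcomplete.R_complete _ (picard_cauchy_crit x)).

Lemma picard_limit_dist n : dist_le picard_limit (picard n) (tail n).
Proof.
  intros x. apply (Un_cv_dist_le (fun m => picard m x) _ _ _ n).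
  - exact (proj2_sig (Rcomplete.R_complete _ (picard_cauchy_crit x))).
  - intros m Hm. apply picard_cauchy, Hm.
Qed.

Lemma picard_unif_cv : unif_cv picard picard_limit.
Proof.
  intros eps Heps. destruct (tail_vanishes eps Heps) as [N HN]. exists N.
  intros n x Hn. eapply Rle_lt_trans; [apply picard_limit_dist | apply HN, Hn].
Qed.

Lemma picard_limit_P : P picard_limit.
Proof. apply (P_unif_cv picard); [apply picard_P | apply picard_unif_cv]. Qed.

Lemma picard_limit_fixed x : F picard_limit x = picard_limit x.
Proof.
  apply Rminus_diag_uniq, Rabs_eq_0, Rle_antisym; [| apply Rabs_pos].
  apply le_epsilon. intros eps Heps. rewrite Rplus_0_l.
  destruct (tail_vanishes (eps / 2) ltac:(lra)) as [N HN]. specialize (HN N (Nat.le_refl N)).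
  pose proof (F_contract _ _ _ picard_limit_P (picard_P N) (picard_limit_dist N) x) as H1.
  pose proof (picard_limit_dist (S N) x) as H2.
  assert (Htail : 0 <= tail N)
    by (eapply Rle_trans; [apply Rabs_pos | apply (picard_cauchy _ _ (Nat.le_refl N) 0)]).
  assert (Hsucc : tail (S N) = k * tail N) by (unfold tail; simpl; field; lra).
  change (picard (S N)) with (F (picard N)) in H2.
  replace (F picard_limit x - picard_limit x)
    with ((F picard_limit x - F (picard N) x) - (picard_limit x - F (picard N) x)) by ring.
  eapply Rle_trans; [apply Rabs_triang|]. rewrite Rabs_Ropp. nra.
Qed.

End Picard.

Theorem picard_fixed_point (P : (R -> R) -> Prop) (F : (R -> R) -> R -> R) k f0 D :
  0 <= k < 1 -> (forall f, P f -> P (F f)) ->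
  (forall f g d, P f -> P g -> dist_le f g d -> dist_le (F f) (F g) (k * d)) ->
  (forall u l, (forall n, P (u n)) -> unif_cv u l -> P l) ->
  P f0 -> dist_le (F f0) f0 D ->
  exists f, P f /\ forall x, F f x = f x.
Proof.
  intros k_range P_F F_contract P_unif_cv P_f0 F_f0.
  exists (picard_limit P F k f0 D k_range P_F F_contract P_f0 F_f0).
  split; [apply picard_limit_P | apply picard_limit_fixed]; exact P_unif_cv.
Qed.

Lemma continuity_pt_Lipschitz_at f x L :
  (forall y, Rabs (f y - f x) <= L * Rabs (y - x)) -> continuity_pt f x.
Proof.
  intros Hf eps Heps. pose proof (Rabs_pos L) as HL.
  set (q := eps / (Rabs L + 1)).
  assert (Hq : 0 < q) by (apply Rdiv_lt_0_compat; lra).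
  assert (Hqe : q * (Rabs L + 1) = eps) by (unfold q; field; lra).
  exists q. split; [exact Hq|]. intros y [_ Hy]. simpl in *. unfold R_dist in *.
  eapply Rle_lt_trans; [apply Hf|]. pose proof (Rle_abs L). pose proof (Rabs_pos (y - x)). nra.
Qed.

Lemma ex_RInt_continuity_pt f a b : (forall z, continuity_pt f z) -> ex_RInt f a b.
Proof.
  intros Hf. apply (ex_RInt_continuous (V := R_CompleteNormedModule)).
  intros z _. apply continuity_pt_filterlim, Hf.
Qed.

Lemma derivable_pt_lim_RInt f a x :
  (forall z, continuity_pt f z) -> derivable_pt_lim (fun y => RInt f a y) x (f x).
Proof.
  intros Hf. apply is_derive_Reals, (is_derive_RInt f (RInt f a) a).
  - apply filter_forall. intros y. apply (RInt_correct (V := R_CompleteNormedModule)).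
    exact (ex_RInt_continuity_pt f a y Hf).
  - apply continuity_pt_filterlim, Hf.
Qed.

Lemma RInt_le_continuity_pt f g a b : a <= b ->
  (forall z, continuity_pt f z) -> (forall z, continuity_pt g z) ->
  (forall x, a <= x <= b -> f x <= g x) -> RInt f a b <= RInt g a b.
Proof.
  intros Hab Hf Hg Hfg. apply RInt_le; try apply ex_RInt_continuity_pt; auto.
  intros x Hx. apply Hfg. lra.
Qed.

Lemma RInt_const_R c a b : RInt (fun _ => c) a b = (b - a) * c.
Proof. rewrite RInt_const. reflexivity. Qed.

Lemma RInt_sqr c s : RInt (fun t => c * t ^ 2) 0 s = c * s ^ 3 / 3.
Proof.
  apply is_RInt_unique.
  replace (c * s ^ 3 / 3) with (minus (c * s ^ 3 / 3) (c * 0 ^ 3 / 3))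
    by (unfold minus, plus, opp; simpl; field).
  apply (is_RInt_derive (V := R_CompleteNormedModule) (fun t => c * t ^ 3 / 3)).
  - intros x _. auto_derive; [exact I | field].
  - intros x _. apply continuity_pt_filterlim. reg.
Qed.

(** * The mass function *)

Definition mass (rho : R -> R) (r : R) : R := RInt (fun t => 4 * PI * t ^ 2 * rho t) 0 r.

Lemma mass_0 rho : mass rho 0 = 0.
Proof. exact (RInt_point 0 _). Qed.

Section Mass.

Variable rho : R -> R.
Hypothesis rho_cont : forall x, continuity_pt rho x.

Lemma continuity_pt_mass_integrand x : continuity_pt (fun t => 4 * PI * t ^ 2 * rho t) x.
Proof. reg. apply rho_cont. Qed.

Lemma mass_derive r : derivable_pt_lim (mass rho) r (4 * PI * r ^ 2 * rho r).
Proof. apply (derivable_pt_lim_RInt (fun t => 4 * PI * t ^ 2 * rho t)), continuity_pt_mass_integrand. Qed.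

Lemma continuity_pt_mass r : continuity_pt (mass rho) r.
Proof. exact (derivable_continuous_pt _ _ (exist _ _ (mass_derive r))). Qed.

Lemma mass_shift c s : mass (fun t => rho t + c) s = mass rho s + 4 * PI * c * s ^ 3 / 3.
Proof.
  unfold mass. rewrite <- RInt_sqr.
  rewrite <- (RInt_plus (V := R_CompleteNormedModule)) by
    (apply ex_RInt_continuity_pt; intros; first [apply continuity_pt_mass_integrand | reg]).
  apply RInt_ext. intros t _. unfold plus. simpl. ring.
Qed.

Lemma mass_increasing x y : x <= y -> (forall t, x <= t <= y -> 0 <= rho t) -> mass rho x <= mass rho y.
Proof.
  intros Hxy Hpos. pose proof continuity_pt_mass_integrand as Hc.
  assert (Hsplit : mass rho x + RInt (fun t => 4 * PI * t ^ 2 * rho t) x y = mass rho y)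
    by exact (RInt_Chasles (V := R_CompleteNormedModule) _ 0 x y
                (ex_RInt_continuity_pt _ _ _ Hc) (ex_RInt_continuity_pt _ _ _ Hc)).
  assert (0 <= RInt (fun t => 4 * PI * t ^ 2 * rho t) x y); [|lra].
  rewrite <- (Rmult_0_r (y - x)), <- RInt_const_R.
  apply RInt_le_continuity_pt; auto; [intros; reg|].
  intros t Ht. pose proof PI_RGT_0. pose proof (pow2_ge_0 t). specialize (Hpos t Ht).
  apply Rmult_le_pos; nra.
Qed.

End Mass.

Lemma mass_const c s : mass (fun _ => c) s = 4 * PI * c * s ^ 3 / 3.
Proof. unfold mass. rewrite <- RInt_sqr. apply RInt_ext. intros t _. simpl. ring. Qed.

Lemma mass_le r1 r2 s : (forall x, continuity_pt r1 x) -> (forall x, continuity_pt r2 x) ->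
  0 <= s -> (forall t, 0 <= t <= s -> r1 t <= r2 t) -> mass r1 s <= mass r2 s.
Proof.
  intros H1 H2 Hs H12. apply RInt_le_continuity_pt; try apply continuity_pt_mass_integrand; auto.
  intros t Ht. apply Rmult_le_compat_l; [| exact (H12 t Ht)].
  pose proof PI_RGT_0. pose proof (pow2_ge_0 t). nra.
Qed.

Lemma mass_bounds rho a b s : (forall x, continuity_pt rho x) -> 0 <= s ->
  (forall t, 0 <= t <= s -> a <= rho t <= b) ->
  4 * PI * a * s ^ 3 / 3 <= mass rho s <= 4 * PI * b * s ^ 3 / 3.
Proof.
  intros Hc Hs Hab. rewrite <- !mass_const.
  assert (Hconst : forall c x, continuity_pt (fun _ => c) x) by (intros; reg).
  split; apply mass_le; auto; intros t Ht; apply (Hab t Ht).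
Qed.

Lemma mass_ratio_bounds rho a b s : (forall x, continuity_pt rho x) -> 0 < s ->
  (forall t, 0 <= t <= s -> a <= rho t <= b) ->
  a <= 3 / (4 * PI) * (mass rho s / s ^ 3) <= b.
Proof.
  intros Hc Hs Hab. pose proof (mass_bounds rho a b s Hc (Rlt_le _ _ Hs) Hab) as Hm.
  pose proof PI_RGT_0. assert (Hs3 : 0 < s ^ 3) by (apply pow_lt; lra).
  set (q := 3 / (4 * PI) * (mass rho s / s ^ 3)).
  assert (Hq : mass rho s = q * (4 * PI * s ^ 3 / 3)) by (unfold q; field; lra).
  assert (Hw : 0 < 4 * PI * s ^ 3 / 3) by (apply Rdiv_lt_0_compat; nra).
  rewrite Hq in Hm. split; apply (Rmult_le_reg_r (4 * PI * s ^ 3 / 3)); auto; lra.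
Qed.

Lemma mass_Lipschitz r1 r2 d s : (forall x, continuity_pt r1 x) -> (forall x, continuity_pt r2 x) ->
  0 <= s -> dist_le r1 r2 d -> Rabs (mass r1 s - mass r2 s) <= 4 * PI * d * s ^ 3 / 3.
Proof.
  intros H1 H2 Hs Hd.
  assert (Hshift : forall r, (forall x, continuity_pt r x) -> forall x, continuity_pt (fun t => r t + d) x)
    by (intros; reg; auto).
  assert (mass r1 s <= mass (fun t => r2 t + d) s)
    by (apply mass_le; auto; intros t _; specialize (Hd t); apply Rabs_le_between' in Hd; lra).
  assert (mass r2 s <= mass (fun t => r1 t + d) s)
    by (apply mass_le; auto; intros t _; specialize (Hd t); apply Rabs_le_between' in Hd; lra).
  rewrite mass_shift in * by auto. apply Rabs_le. lra.
Qed.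

(** * The reduced right-hand side *)

Definition reduced_rhs (p rho u s : R) := (2 * rho - 1) * (p * (rho - 1) + u) / (1 - 2 * s ^ 2 * u).

Lemma tov_rho_rhs_reduced s M rho : 0 < s -> 1 - 2 * s ^ 2 * (M / s ^ 3) <> 0 ->
  tov_rho_rhs s M rho = - (s * reduced_rhs (4 * PI) rho (M / s ^ 3) s).
Proof.
  intros Hs HD. unfold tov_rho_rhs, reduced_rhs.
  assert (Hs3 : s ^ 3 <> 0) by (apply pow_nonzero; lra).
  assert (HsM : s - 2 * M <> 0).
  { replace (s - 2 * M) with (s * (1 - 2 * s ^ 2 * (M / s ^ 3))) by (field; lra).
    apply Rmult_integral_contrapositive_currified; lra. }
  field. lra.
Qed.

Section ReducedBounds.

Variables (p s : R).
Hypothesis p_range : 0 < p <= 16.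
Hypothesis s_range : 0 <= s <= 1 / 100.

Lemma reduced_denominator_bounds u : 0 <= u <= p * 2 / 3 -> 1 / 2 <= 1 - 2 * s ^ 2 * u <= 1.
Proof. intros. assert (0 <= s ^ 2 <= 1 / 10000) by (split; [apply pow2_ge_0 | simpl; nra]). nra. Qed.

Lemma reduced_rhs_bounds rho u : 1 <= rho <= 2 -> 0 <= u <= p * 2 / 3 ->
  0 <= reduced_rhs p rho u s <= 162.
Proof.
  intros Hr Hu. pose proof (reduced_denominator_bounds u Hu) as HD. unfold reduced_rhs.
  assert (HA : 0 <= p * (rho - 1) + u <= 27) by (split; nra).
  assert (HN : 0 <= (2 * rho - 1) * (p * (rho - 1) + u) <= 81) by (split; nra).
  split.
  - apply Rdiv_le_0_compat; lra.
  - apply Rle_trans with ((2 * rho - 1) * (p * (rho - 1) + u) / (1 / 2)).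
    + apply Rmult_le_compat_l; [lra|]. apply Rinv_le_contravar; lra.
    + lra.
Qed.

Lemma reduced_rhs_Lipschitz r1 r2 u1 u2 d : 1 <= r1 <= 2 -> 1 <= r2 <= 2 ->
  0 <= u1 <= p * 2 / 3 -> 0 <= u2 <= p * 2 / 3 ->
  Rabs (r1 - r2) <= d -> Rabs (u1 - u2) <= p / 3 * d ->
  Rabs (reduced_rhs p r1 u1 s - reduced_rhs p r2 u2 s) <= 800 * d.
Proof.
  intros H1 H2 Hu1 Hu2 Hr Hu.
  pose proof (reduced_denominator_bounds u1 Hu1) as HD1.
  pose proof (reduced_denominator_bounds u2 Hu2) as HD2.
  assert (Hd : 0 <= d) by (pose proof (Rabs_pos (r1 - r2)); lra).
  assert (Hs2 : 0 <= s ^ 2 <= 1 / 10000) by (split; [apply pow2_ge_0 | simpl; nra]).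
  apply Rabs_le_between in Hr; apply Rabs_le_between in Hu.
  set (D1 := 1 - 2 * s ^ 2 * u1) in *. set (D2 := 1 - 2 * s ^ 2 * u2) in *.
  set (N1 := (2 * r1 - 1) * (p * (r1 - 1) + u1)). set (N2 := (2 * r2 - 1) * (p * (r2 - 1) + u2)).
  assert (HN : Rabs (N1 - N2) <= 118 * d).
  { replace (N1 - N2) with (2 * (r1 - r2) * (p * (r1 - 1) + u1) + (2 * r2 - 1) * (p * (r1 - r2) + (u1 - u2)))
      by (unfold N1, N2; ring).
    assert (HA1 : 0 <= p * (r1 - 1) + u1 <= 27) by (split; nra).
    assert (Hp : Rabs (p * (r1 - r2) + (u1 - u2)) <= 64 / 3 * d) by (apply Rabs_le; split; nra).
    eapply Rle_trans; [apply Rabs_triang|]. rewrite !Rabs_mult, (Rabs_right 2), (Rabs_right (2 * r2 - 1)),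
      (Rabs_right (p * (r1 - 1) + u1)) by lra.
    assert (Rabs (r1 - r2) <= d) by (apply Rabs_le; lra).
    pose proof (Rabs_pos (r1 - r2)). pose proof (Rabs_pos (p * (r1 - r2) + (u1 - u2))). nra. }
  assert (HA2 : 0 <= p * (r2 - 1) + u2 <= 27) by (split; nra).
  assert (HN2 : 0 <= N2 <= 81) by (unfold N2; split; nra).
  assert (HdD : Rabs (D2 - D1) <= d) by (apply Rabs_le; unfold D1, D2; split; nra).
  replace (reduced_rhs p r1 u1 s - reduced_rhs p r2 u2 s)
    with (((N1 - N2) * D2 + N2 * (D2 - D1)) / (D1 * D2))
    by (unfold reduced_rhs, N1, N2, D1, D2; field; unfold D1, D2 in HD1, HD2; lra).
  unfold Rdiv. rewrite Rabs_mult, Rabs_inv, (Rabs_right (D1 * D2)) by nra.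
  apply Rle_trans with ((118 * d + 81 * d) * / (1 / 4)).
  - apply Rmult_le_compat; [apply Rabs_pos | apply Rlt_le, Rinv_0_lt_compat; nra | |].
    + eapply Rle_trans; [apply Rabs_triang|]. rewrite !Rabs_mult, (Rabs_right D2), (Rabs_right N2) by lra.
      pose proof (Rabs_pos (N1 - N2)). pose proof (Rabs_pos (D2 - D1)). nra.
    + apply Rinv_le_contravar; nra.
  - lra.
Qed.

End ReducedBounds.

Lemma continuity_pt_tov_rho_rhs f g h x : continuity_pt f x -> continuity_pt g x -> continuity_pt h x ->
  f x <> 0 -> f x - 2 * g x <> 0 -> continuity_pt (fun y => tov_rho_rhs (f y) (g y) (h y)) x.
Proof. intros. unfold tov_rho_rhs. reg. Qed.

(** * Small static hard stars *)

Definition admissible (rho : R -> R) := (forall x, continuity_pt rho x) /\ (forall x, 1 <= rho x <= 2).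

Lemma admissible_unif_cv u l : (forall n, admissible (u n)) -> unif_cv u l -> admissible l.
Proof.
  intros Hu Hl. split.
  - intros x. apply (continuity_pt_unif_cv u); auto. intros n. apply Hu.
  - apply (unif_cv_bounds u); auto. intros n. apply Hu.
Qed.

Lemma admissible_one : admissible (fun _ => 1).
Proof. split; [intros; reg | intros; lra]. Qed.

Lemma four_PI_range : 0 < 4 * PI <= 16.
Proof. pose proof PI_RGT_0. pose proof PI_4. lra. Qed.

Lemma mass_ratio_admissible rho c : admissible rho -> 0 < c -> 0 <= mass rho c / c ^ 3 <= 4 * PI * 2 / 3.
Proof.
  intros [Hc Hb] Hpos. pose proof four_PI_range.
  pose proof (mass_ratio_bounds rho 1 2 c Hc Hpos (fun t _ => Hb t)) as Hr.
  replace (mass rho c / c ^ 3) with (4 * PI / 3 * (3 / (4 * PI) * (mass rho c / c ^ 3))) by (field; lra).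
  nra.
Qed.

Section HardStar.

Variable Rad : R.
Hypothesis Rad_range : 0 < Rad <= 1 / 100.

(* Radii are clamped to [0, Rad], so that every function below is defined and continuous
   on the whole line. *)
Definition clamp (s : R) := Rmax 0 (Rmin s Rad).

Ltac clamp_cases := unfold clamp, Rmax, Rmin; repeat destruct Rle_dec; try lra.

Lemma clamp_range s : 0 <= clamp s <= Rad.
Proof. clamp_cases. Qed.

Lemma clamp_id s : 0 <= s <= Rad -> clamp s = s.
Proof. intros. clamp_cases. Qed.

Lemma clamp_pos s : 0 < s -> 0 < clamp s.
Proof. intros. clamp_cases. Qed.

Lemma clamp_small s : 0 <= clamp s <= 1 / 100.
Proof. pose proof (clamp_range s). lra. Qed.

Lemma clamp_nonpos x : x <= 0 -> clamp x = 0.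
Proof. intros. clamp_cases. Qed.

Lemma clamp_le_dist x y : x <= 0 -> clamp y <= Rabs (y - x).
Proof. intros. pose proof (Rle_abs (y - x)). pose proof (Rabs_pos (y - x)). clamp_cases. Qed.

Lemma continuity_pt_clamp x : continuity_pt clamp x.
Proof.
  apply (continuity_pt_Lipschitz_at _ _ 1). intros y. rewrite Rmult_1_l.
  pose proof (Rle_abs (y - x)). pose proof (Rabs_maj2 (y - x)). apply Rabs_le_between. clamp_cases.
Qed.

Definition decay (rho : R -> R) (s : R) :=
  - tov_rho_rhs (clamp s) (mass rho (clamp s)) (rho (clamp s)).

(* At the centre both divisions in [tov_rho_rhs] are by zero, which Rocq evaluates to 0. *)
Lemma decay_center rho s : clamp s = 0 -> decay rho s = 0.
Proof.
  intros H. unfold decay, tov_rho_rhs. rewrite H, mass_0.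
  replace (0 - 2 * 0) with 0 by ring. unfold Rdiv. rewrite Rinv_0. ring.
Qed.

Section Admissible.

Variable rho : R -> R.
Hypothesis rho_admissible : admissible rho.

Lemma compactness_bound s : 0 < clamp s -> 1 / 2 <= 1 - 2 * (mass rho (clamp s) / clamp s).
Proof.
  intros Hc.
  pose proof (reduced_denominator_bounds _ _ four_PI_range (clamp_small s) _
    (mass_ratio_admissible rho _ rho_admissible Hc)).
  replace (mass rho (clamp s) / clamp s)
    with (clamp s ^ 2 * (mass rho (clamp s) / clamp s ^ 3)) by (field; lra). lra.
Qed.

Lemma decay_reduced s : 0 < clamp s -> decay rho s =
  clamp s * reduced_rhs (4 * PI) (rho (clamp s)) (mass rho (clamp s) / clamp s ^ 3) (clamp s).
Proof.
  intros Hc. unfold decay. rewrite tov_rho_rhs_reduced; [ring | exact Hc|].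
  pose proof (compactness_bound s Hc).
  replace (2 * clamp s ^ 2 * (mass rho (clamp s) / clamp s ^ 3))
    with (2 * (mass rho (clamp s) / clamp s)) by (field; lra). lra.
Qed.

Lemma decay_bounds s : 0 <= decay rho s <= 162 * clamp s.
Proof.
  pose proof (clamp_range s) as Hs. destruct (Req_dec (clamp s) 0) as [H0 | Hne].
  - rewrite decay_center, H0 by exact H0. lra.
  - assert (Hc : 0 < clamp s) by lra. rewrite decay_reduced by exact Hc.
    pose proof (reduced_rhs_bounds _ _ four_PI_range (clamp_small s) (rho (clamp s)) _
      (proj2 rho_admissible (clamp s)) (mass_ratio_admissible rho _ rho_admissible Hc)). nra.
Qed.

Lemma continuity_pt_decay x : continuity_pt (decay rho) x.
Proof.
  destruct rho_admissible as [Hc _]. destruct (Rle_lt_dec x 0) as [Hx | Hx].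
  - apply (continuity_pt_Lipschitz_at _ _ 162). intros y.
    rewrite (decay_center rho x (clamp_nonpos x Hx)).
    pose proof (decay_bounds y). pose proof (clamp_le_dist x y Hx).
    rewrite Rminus_0_r, Rabs_right by lra. lra.
  - pose proof (clamp_pos x Hx) as Hcx. unfold decay.
    apply continuity_pt_opp, continuity_pt_tov_rho_rhs.
    + apply continuity_pt_clamp.
    + apply (continuity_pt_comp clamp (mass rho)); [apply continuity_pt_clamp | apply continuity_pt_mass, Hc].
    + apply (continuity_pt_comp clamp rho); [apply continuity_pt_clamp | apply Hc].
    + lra.
    + pose proof (compactness_bound x Hcx).
      replace (clamp x - 2 * mass rho (clamp x))
        with (clamp x * (1 - 2 * (mass rho (clamp x) / clamp x))) by (field; lra).
      apply Rmult_integral_contrapositive_currified; lra.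
Qed.

Definition tov_density (r : R) : R := 1 + RInt (decay rho) r Rad.

Lemma ex_RInt_decay a b : ex_RInt (decay rho) a b.
Proof. apply ex_RInt_continuity_pt, continuity_pt_decay. Qed.

Lemma tov_density_derive r : derivable_pt_lim tov_density r (- decay rho r).
Proof.
  assert (Hswap : forall r, tov_density r = 1 - RInt (decay rho) Rad r).
  { intros r'. unfold tov_density.
    rewrite <- (opp_RInt_swap (V := R_CompleteNormedModule)) by apply ex_RInt_decay.
    unfold opp. simpl. ring. }
  apply (derivable_pt_lim_ext (fun r => 1 - RInt (decay rho) Rad r)); [intros; symmetry; apply Hswap|].
  replace (- decay rho r) with (0 - decay rho r) by ring.
  apply (derivable_pt_lim_minus (fun _ => 1) (fun r => RInt (decay rho) Rad r)).
  - apply derivable_pt_lim_const.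
  - apply derivable_pt_lim_RInt, continuity_pt_decay.
Qed.

Lemma continuity_pt_tov_density r : continuity_pt tov_density r.
Proof. exact (derivable_continuous_pt _ _ (exist _ _ (tov_density_derive r))). Qed.

Lemma tov_density_surface : tov_density Rad = 1.
Proof. unfold tov_density. rewrite (RInt_point Rad (decay rho)). unfold zero. simpl. ring. Qed.

Lemma tov_density_decreasing x y : x <= y -> tov_density y <= tov_density x.
Proof.
  intros Hxy.
  assert (Hsplit : RInt (decay rho) x y + RInt (decay rho) y Rad = RInt (decay rho) x Rad)
    by exact (RInt_Chasles (V := R_CompleteNormedModule) _ x y Rad (ex_RInt_decay x y) (ex_RInt_decay y Rad)).
  unfold tov_density. rewrite <- Hsplit.
  assert (0 <= RInt (decay rho) x y); [|lra].
  rewrite <- (Rmult_0_r (y - x)), <- RInt_const_R.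
  apply RInt_le_continuity_pt; [exact Hxy | intros; reg | apply continuity_pt_decay |].
  intros t _. apply decay_bounds.
Qed.

Lemma tov_density_bounds r : 0 <= r <= Rad -> 1 <= tov_density r <= 1 + 162 * Rad ^ 2.
Proof.
  intros Hr. split.
  - rewrite <- tov_density_surface. apply tov_density_decreasing, Hr.
  - unfold tov_density.
    assert (Hint : RInt (decay rho) r Rad <= RInt (fun _ => 162 * Rad) r Rad).
    { apply RInt_le_continuity_pt; [apply Hr | apply continuity_pt_decay | intros; reg |].
      intros t _. pose proof (decay_bounds t). pose proof (clamp_range t). nra. }
    rewrite RInt_const_R in Hint. simpl. nra.
Qed.

End Admissible.

Definition tov_map (rho : R -> R) (x : R) : R := tov_density rho (clamp x).

Lemma admissible_tov_map rho : admissible rho -> admissible (tov_map rho).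
Proof.
  intros Hrho. split.
  - intros x. apply (continuity_pt_comp clamp (tov_density rho)).
    + apply continuity_pt_clamp.
    + apply continuity_pt_tov_density, Hrho.
  - intros x. pose proof (tov_density_bounds rho Hrho (clamp x) (clamp_range x)).
    assert (Rad ^ 2 <= 1 / 10000) by (simpl; nra). unfold tov_map. lra.
Qed.

Lemma tov_map_one : dist_le (tov_map (fun _ => 1)) (fun _ => 1) 1.
Proof.
  intros x. destruct (admissible_tov_map _ admissible_one) as [_ Hb]. apply Rabs_le_between'.
  specialize (Hb x). lra.
Qed.

Section Contraction.

Variables (r1 r2 : R -> R) (d : R).
Hypotheses (r1_admissible : admissible r1) (r2_admissible : admissible r2).
Hypothesis r1_r2_close : dist_le r1 r2 d.

Lemma decay_Lipschitz s : Rabs (decay r1 s - decay r2 s) <= 800 * d * clamp s.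
Proof.
  pose proof (clamp_range s) as Hs.
  assert (Hd : 0 <= d) by (eapply Rle_trans; [apply Rabs_pos | apply (r1_r2_close 0)]).
  destruct (Req_dec (clamp s) 0) as [H0 | Hne].
  - rewrite !decay_center, H0 by exact H0. rewrite Rminus_diag, Rabs_R0. lra.
  - assert (Hc : 0 < clamp s) by lra. rewrite !decay_reduced by assumption.
    set (c := clamp s) in *. pose proof four_PI_range.
    assert (Hc3 : 0 < c ^ 3) by (apply pow_lt; lra).
    assert (Hu : Rabs (mass r1 c / c ^ 3 - mass r2 c / c ^ 3) <= 4 * PI / 3 * d).
    { replace (mass r1 c / c ^ 3 - mass r2 c / c ^ 3) with ((mass r1 c - mass r2 c) / c ^ 3) by (field; lra).
      unfold Rdiv. rewrite Rabs_mult, Rabs_inv, (Rabs_right (c ^ 3)) by lra.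
      apply (Rmult_le_reg_r (c ^ 3)); [exact Hc3|].
      rewrite Rmult_assoc, Rinv_l, Rmult_1_r by lra.
      eapply Rle_trans.
      { apply mass_Lipschitz; [apply r1_admissible | apply r2_admissible | lra | exact r1_r2_close]. }
      lra. }
    pose proof (reduced_rhs_Lipschitz _ _ four_PI_range (clamp_small s) _ _ _ _ _
      (proj2 r1_admissible c) (proj2 r2_admissible c)
      (mass_ratio_admissible r1 c r1_admissible Hc) (mass_ratio_admissible r2 c r2_admissible Hc)
      (r1_r2_close c) Hu) as HL. fold c in HL.
    rewrite <- Rmult_minus_distr_l, Rabs_mult, (Rabs_right c) by lra. nra.
Qed.

Lemma tov_map_contract : dist_le (tov_map r1) (tov_map r2) (1 / 2 * d).
Proof.
  intros x. unfold tov_map, tov_density. pose proof (clamp_range x) as Hx. set (r := clamp x) in *.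
  assert (Hd : 0 <= d) by (eapply Rle_trans; [apply Rabs_pos | apply (r1_r2_close 0)]).
  pose proof (continuity_pt_decay r1 r1_admissible) as Hc1.
  pose proof (continuity_pt_decay r2 r2_admissible) as Hc2.
  replace (1 + RInt (decay r1) r Rad - (1 + RInt (decay r2) r Rad))
    with (RInt (fun t => decay r1 t - decay r2 t) r Rad)
    by (rewrite (RInt_minus (V := R_CompleteNormedModule)) by (apply ex_RInt_continuity_pt; auto);
        unfold minus, plus, opp; simpl; ring).
  assert (Hcd : forall z, continuity_pt (fun t => decay r1 t - decay r2 t) z)
    by (intros; apply continuity_pt_minus; auto).
  eapply Rle_trans; [apply abs_RInt_le, ex_RInt_continuity_pt; [apply Hx | exact Hcd]|].
  eapply Rle_trans; [apply (RInt_le_continuity_pt _ (fun _ => 800 * d * Rad)); [apply Hx | | intros; reg |]|].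
  - intros z. apply (continuity_pt_comp _ Rabs); [apply Hcd | apply Rcontinuity_abs].
  - intros t _. pose proof (decay_Lipschitz t). pose proof (clamp_range t).
    assert (800 * d * clamp t <= 800 * d * Rad) by (apply Rmult_le_compat_l; lra). lra.
  - rewrite RInt_const_R. assert (0 <= d * Rad * r) by (apply Rmult_le_pos; [apply Rmult_le_pos|]; lra).
    assert (d * Rad * Rad <= d * (1 / 100) * (1 / 100)) by (apply Rmult_le_compat; nra). nra.
Qed.

End Contraction.

Section FixedPoint.

Variable rho : R -> R.
Hypothesis rho_admissible : admissible rho.
Hypothesis rho_fixed : forall x, tov_map rho x = rho x.

Lemma fixed_tov_density r : 0 <= r <= Rad -> tov_density rho r = rho r.
Proof. intros Hr. rewrite <- rho_fixed. unfold tov_map. rewrite clamp_id by exact Hr. reflexivity. Qed.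

Lemma fixed_mass_derive r : 0 <= r <= Rad ->
  derivable_pt_lim (mass rho) r (tov_m_rhs r (mass rho r) (tov_density rho r)).
Proof.
  intros Hr. unfold tov_m_rhs. rewrite fixed_tov_density by exact Hr.
  apply mass_derive, rho_admissible.
Qed.

Lemma fixed_density_derive r : 0 <= r <= Rad ->
  derivable_pt_lim (tov_density rho) r (tov_rho_rhs r (mass rho r) (tov_density rho r)).
Proof.
  intros Hr. replace (tov_rho_rhs r (mass rho r) (tov_density rho r)) with (- decay rho r).
  - apply tov_density_derive, rho_admissible.
  - unfold decay. rewrite clamp_id, fixed_tov_density by exact Hr. ring.
Qed.

Lemma fixed_mass_ratio_bounds r : 0 < r <= Rad ->
  1 <= 3 / (4 * PI) * (mass rho r / r ^ 3) <= 1 + 162 * Rad ^ 2.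
Proof.
  intros Hr. apply mass_ratio_bounds; [apply rho_admissible | lra |].
  intros t Ht. rewrite <- fixed_tov_density by lra. apply tov_density_bounds; [exact rho_admissible | lra].
Qed.

End FixedPoint.

End HardStar.

Lemma hundredth_lt_sqrt : 1 / 100 < sqrt (3 / (4 * PI)).
Proof.
  pose proof four_PI_range.
  rewrite <- (sqrt_pow2 (1 / 100)) by lra. apply sqrt_lt_1_alt. split; [simpl; lra|].
  apply (Rmult_lt_reg_r (4 * PI)); [lra|]. replace (3 / (4 * PI) * (4 * PI)) with 3 by (field; lra).
  simpl. lra.
Qed.

Theorem proposition2p1 :
  exists R0 C : R, 0 < R0 /\ R0 < sqrt (3 / (4 * PI)) /\ 0 < C /\
  forall Rad : R, 0 < Rad < R0 ->
  exists m rho : R -> R,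
    (forall r, 0 <= r <= Rad -> continuity_pt m r /\ continuity_pt rho r) /\
    (forall r, 0 < r <= Rad ->
        derivable_pt_lim m r (tov_m_rhs r (m r) (rho r)) /\
        derivable_pt_lim rho r (tov_rho_rhs r (m r) (rho r))) /\
    (forall x y, 0 <= x -> x <= y -> y <= Rad -> rho y <= rho x /\ m x <= m y) /\
    (forall r, 0 <= r <= Rad -> 1 <= rho r <= 1 + C * Rad ^ 2) /\
    rho Rad = 1 /\ m 0 = 0 /\
    (forall r, 0 < r <= Rad ->
        1 <= 3 / (4 * PI) * (m r / r ^ 3) <= 1 + C * Rad ^ 2).
Proof.
  exists (1 / 100), 162. split; [lra|]. split; [exact hundredth_lt_sqrt|]. split; [lra|].
  intros Rad HRad. assert (HR : 0 < Rad <= 1 / 100) by lra.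
  destruct (picard_fixed_point admissible (tov_map Rad) (1 / 2) (fun _ => 1) 1 ltac:(lra)
    (admissible_tov_map Rad HR) (tov_map_contract Rad HR) admissible_unif_cv admissible_one
    (tov_map_one Rad HR)) as [rho [Hadm Hfix]].
  exists (mass rho), (tov_density Rad rho).
  split; [|split; [|split; [|split; [|split; [|split]]]]].
  - intros r _. split; [apply continuity_pt_mass | apply continuity_pt_tov_density]; auto; apply Hadm.
  - intros r Hr. split; [apply fixed_mass_derive | apply fixed_density_derive]; auto; lra.
  - intros x y Hx Hxy Hy. split; [apply tov_density_decreasing; auto |].
    apply mass_increasing; [apply Hadm | exact Hxy |]. intros t _. pose proof (proj2 Hadm t). lra.
  - apply tov_density_bounds; auto.
  - apply tov_density_surface; auto.
  - apply mass_0.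
  - apply fixed_mass_ratio_bounds; auto.
Qed.
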